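(* Suppose $G$ is an abelian complex reflection group, and let $T$ and $V$ be length-$n$ reflection factorizations which generate $G$, factor the same element of $G$, and have the same multiset of conjugacy classes. Then $T$ and $V$ are Hurwitz equivalent.
   Context: A complex reflection group is a finite group of linear transformations of a complex vector space generated by reflections (linear maps whose fixed space has codimension $1$). A reflection factorization of $g\in G$ of length $n$ is a tuple $(r_1,\dots,r_n)$ of reflections in $G$ with $r_1\cdots r_n=g$; it generates $\langle r_1,\dots,r_n\rangle$. The Hurwitz move $\sigma_i$ ($1\le i<n$) sends $(r_1,\dots,r_n)$ to $(r_1,\dots,r_{i-1},r_{i+1},r_{i+1}^{-1}r_ir_{i+1},r_{i+2},\dots,r_n)$; two factorizations are Hurwitz equivalent if one is obtained from the other by a finite sequence of Hurwitz moves. The multiset of conjugacy classes of a factorization generating $G$ is the multiset of $G$-conjugacy classes of its entries. *)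

From HB Require Import structures.
From mathcomp Require Import all_boot all_order all_algebra all_fingroup all_solvable.
From mathcomp Require Import all_field all_character.
From Stdlib Require Import Relation_Operators.
Set Implicit Arguments. Unset Strict Implicit. Unset Printing Implicit Defensive.
Import GRing.Theory.
Local Open Scope ring_scope.

(* A complex reflection group is modelled as an abstract finite group G
   together with a faithful complex representation rG : G -> GL_d(algC);
   G is identified with its (isomorphic) image rG(G) <= GL_d(C). *)

Section Reflections.
Variables (gT : finGroupType) (G : {group gT}) (d : nat).
Variable rG : mx_representation algC G d.

Definition reflection_in (g : gT) : bool :=
  (g \in G) && (\rank (rG g - 1%:M)%R == 1)%N.

Definition complex_reflection_group : bool :=
  mx_faithful rG && (G == <<[set g in G | reflection_in g]>>)%g.

Definition reflection_factorization (n : nat) (g : gT) (T : seq gT) : Prop :=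
  [/\ size T = n, all reflection_in T & (\prod_(r <- T) r)%g = g].

Definition generates (T : seq gT) : Prop := (<<[set x in T]>>)%g = G :> {set gT}.

Definition same_class_multiset (T V : seq gT) : bool :=
  perm_eq [seq (x ^: G)%g | x <- T] [seq (x ^: G)%g | x <- V].
End Reflections.

Section Hurwitz.
Variable gT : finGroupType.

(* Hurwitz move sigma_{i+1} (0-based index i):
   (.., r_i, r_{i+1}, ..) |-> (.., r_{i+1}, r_{i+1}^-1 r_i r_{i+1}, ..);
   in mathcomp, x ^ y = y^-1 * x * y. *)
Definition hurwitz_move (i : nat) (s : seq gT) : seq gT :=
  take i s ++ [:: nth 1%g s i.+1; (nth 1%g s i ^ nth 1%g s i.+1)%g] ++ drop i.+2 s.

Definition hurwitz_step (s t : seq gT) : Prop :=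
  exists2 i : nat, (i.+1 < size s)%N & t = hurwitz_move i s.

Definition hurwitz_equiv : seq gT -> seq gT -> Prop :=
  clos_refl_trans (seq gT) hurwitz_step.
End Hurwitz.

From mathcomp Require Import all_boot all_order all_algebra all_fingroup all_solvable.
From mathcomp Require Import all_field all_character.
From Stdlib Require Import Relation_Operators.

(* In an abelian group conjugation is trivial, so a Hurwitz move merely swaps
   two adjacent entries; adjacent swaps generate all permutations.  Conjugacy
   classes are singletons, so having the same multiset of classes means being
   permutations of each other. *)

Set Implicit Arguments.
Unset Strict Implicit.
Unset Printing Implicit Defensive.

Section HurwitzPermutations.
Variable gT : finGroupType.
Implicit Types (x : gT) (s t : seq gT).

Lemma hurwitz_equiv_cons x s t :
  hurwitz_equiv s t -> hurwitz_equiv (x :: s) (x :: t).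
Proof.
elim=> [u v [i lt_i ->] | u | u v w _ IHuv _ IHvw].
- by apply: rt_step; exists i.+1.
- exact: rt_refl.
- exact: rt_trans IHuv IHvw.
Qed.

Lemma hurwitz_equiv_commute_head x t1 t2 :
  {in t1, forall y, commute x y} ->
  hurwitz_equiv (x :: t1 ++ t2) (t1 ++ x :: t2).
Proof.
elim: t1 => [|y t1 IH] /= cx_t1; first exact: rt_refl.
apply: (@rt_trans _ _ _ (y :: x :: t1 ++ t2)).
  apply: rt_step; exists 0%N => //.
  rewrite /hurwitz_move /= drop0; congr [:: _, _ & _].
  by apply/esym/conjg_fixP/commgP/cx_t1/mem_head.
by apply/hurwitz_equiv_cons/IH => z z_t1; apply: cx_t1; rewrite inE z_t1 orbT.
Qed.

Lemma perm_hurwitz_equiv s t :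
  {in s &, forall x y, commute x y} -> perm_eq s t -> hurwitz_equiv s t.
Proof.
elim: s t => [|x s IH] t cs st.
  by move: st; rewrite perm_sym => /perm_nilP ->; exact: rt_refl.
have x_t : x \in t by rewrite -(perm_mem st) mem_head.
case/splitPr: x_t st => t1 t2 st; have s_t12 : perm_eq s (t1 ++ t2).
  by rewrite -(perm_cons x) (perm_trans st) // -cat1s perm_catCA.
have s_sub : {subset s <= x :: s} by move=> z z_s; rewrite inE z_s orbT.
apply: (@rt_trans _ _ _ (x :: t1 ++ t2)).
  by apply/hurwitz_equiv_cons/IH => // y z /s_sub y_s /s_sub z_s; apply: cs.
apply: hurwitz_equiv_commute_head => y y_t1; apply: cs; first exact: mem_head.
by rewrite (perm_mem st) mem_cat y_t1.
Qed.

End HurwitzPermutations.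

Lemma same_class_multiset_abelian (gT : finGroupType) (G : {group gT}) (T V : seq gT) :
  abelian G -> all (mem G) T -> all (mem G) V ->
  same_class_multiset G T V = perm_eq T V.
Proof.
move=> /abelian_classP classG TG VG.
have classes1 s : all (mem G) s -> [seq x ^: G | x <- s]%g = [seq [set x] | x <- s].
  by move=> sG; apply/eq_in_map => x /(allP sG)/classG.
rewrite /same_class_multiset (classes1 T TG) (classes1 V VG).
by apply/idP/idP; [apply: perm_map_inj; exact: set1_inj | apply: perm_map].
Qed.

Lemma reflections_in_group (gT : finGroupType) (G : {group gT}) (d : nat)
  (rG : mx_representation algC G d) (T : seq gT) :
  all (reflection_in rG) T -> all (mem G) T.
Proof. by apply: sub_all => x /andP[]. Qed.

Theorem proposition3p1 (gT : finGroupType) (G : {group gT}) (d : nat)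
  (rG : mx_representation algC G d) (n : nat) (g : gT) (T V : seq gT) :
  complex_reflection_group rG -> abelian G ->
  reflection_factorization rG n g T -> reflection_factorization rG n g V ->
  generates G T -> generates G V ->
  same_class_multiset G T V ->
  hurwitz_equiv T V.
Proof.
move=> _ abG [_ reflT _] [_ reflV _] _ _.
have TG := reflections_in_group reflT; have VG := reflections_in_group reflV.
rewrite (same_class_multiset_abelian abG TG VG) => TV.
apply: perm_hurwitz_equiv TV => x y /(allP TG) xG /(allP TG) yG.
exact: (centsP abG).
Qed.
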